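(* Let $M\in\mathrm{SL}(n,\mathbb{Z})$ and suppose that for some integer $k\ge1$ the characteristic polynomial of $M^k$ is reducible over $\mathbb{Z}$. Then either the Galois group of the characteristic polynomial of $M$ (acting on its $n$ roots) is imprimitive, or the characteristic polynomial of $M$ is cyclotomic (all its roots are roots of unity).
   Context: A permutation group acting on a set $\Omega$ of size $n$ is called imprimitive if it preserves some partition of $\Omega$ other than the partition into singletons and the partition with the single block $\Omega$ (in particular, an intransitive group is imprimitive in this sense). *)

From HB Require Import structures.
From mathcomp Require Import all_boot all_order all_algebra all_fingroup all_field.
Set Implicit Arguments. Unset Strict Implicit. Unset Printing Implicit Defensive.
Import GRing.Theory Num.Theory.
Local Open Scope ring_scope.

(* A polynomial over Z is reducible over Z if it is a product of two
   non-constant integer polynomials (for monic polynomials such as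
   characteristic polynomials, this is reducibility over Z). *)
Definition reducible_over_Z (p : {poly int}) : Prop :=
  exists q r : {poly int}, p = q * r /\ (1 < size q)%N /\ (1 < size r)%N.

Definition polyC_of_int (p : {poly int}) : {poly algC} := map_poly intr p.

Definition root_labeling n (p : {poly int}) (r : 'I_n -> algC) : Prop :=
  polyC_of_int p = \prod_(i < n) ('X - (r i)%:P).

(* The Galois group of p acting on its n roots (labelled by r): the
   permutations of the labels induced by field automorphisms of algC
   (algC is an algebraic closure of Q, so these restrict to exactly the
   Galois group of the splitting field of p over Q). *)
Definition galois_perm n (r : 'I_n -> algC) (s : 'S_n) : Prop :=
  exists f : {rmorphism algC -> algC}, forall i, r (s i) = f (r i).

Definition imprimitive n (G : 'S_n -> Prop) : Prop :=
  exists P : {set {set 'I_n}},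
    [/\ partition P [set: 'I_n],
        P != [set [set i] | i : 'I_n],
        P != [set [set: 'I_n]] &
        forall s, G s -> forall B, B \in P -> s @: B \in P].

Definition cyclotomic_poly (p : {poly int}) : Prop :=
  forall z : algC, root (polyC_of_int p) z -> exists2 m, (0 < m)%N & z ^+ m = 1.

From HB Require Import structures.
From mathcomp Require Import all_boot all_order all_algebra all_fingroup all_field zify.
Import GRing.Theory Num.Theory.
Local Open Scope ring_scope.
Set Implicit Arguments. Unset Strict Implicit. Unset Printing Implicit Defensive.

Lemma mulz_eq1_eq (x y : int) : x * y = 1 -> x = y.
Proof.
move=> xy1; have ux : x \is a GRing.unit by apply/unitrPr; exists y.
by rewrite -[y](mulKr ux) xy1 mulr1.
Qed.

Section PreimPartition.
Variables (T : finType) (T' : eqType) (h : T -> T').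
Local Notation P := (preim_partition h [set: T]).

Lemma preim_partition_imset (s : {perm T}) :
    (forall x y, (h (s x) == h (s y)) = (h x == h y)) ->
  forall B, B \in P -> s @: B \in P.
Proof.
move=> hs _ /imsetP[x _ ->]; apply/imsetP; exists (s x); first by rewrite inE.
apply/setP => y; rewrite [in RHS]inE /=; apply/imsetP/idP => [[z] | hy].
  by rewrite !inE /= => hxz ->; rewrite hs.
exists ((s^-1)%g y); last by rewrite permKV.
by rewrite !inE -hs permKV; rewrite !inE in hy.
Qed.

Lemma preim_partition_neq_singletons : ~~ injectiveb h -> P != [set [set x] | x : T].
Proof.
case/injectivePn => x [y xy hxy]; apply: contra_neqN xy => /eqP Psingle.
have : [set z in [set: T] | h x == h z] \in P by apply: imset_f.
rewrite Psingle => /imsetP[z _ /setP Ez].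
by move: (Ez x) (Ez y); rewrite !inE hxy eqxx /= => /esym/eqP-> /esym/eqP->.
Qed.

Lemma preim_partition_neq_setT x y : h x != h y -> P != [set [set: T]].
Proof.
apply: contra_neqN => /eqP Pfull.
have : [set z in [set: T] | h x == h z] \in P by apply: imset_f.
by rewrite Pfull inE => /eqP/setP/(_ y); rewrite !inE => /eqP.
Qed.

End PreimPartition.

Lemma imprimitive_preim_partition n (T : eqType) (h : 'I_n -> T) (G : 'S_n -> Prop) x y :
    (forall s, G s -> forall x y, (h (s x) == h (s y)) = (h x == h y)) ->
  ~~ injectiveb h -> h x != h y -> imprimitive G.
Proof.
move=> hG h_ninj hxy; exists (preim_partition h [set: 'I_n]); split.
- exact: preim_partitionP.
- exact: preim_partition_neq_singletons.
- exact: preim_partition_neq_setT hxy.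
- by move=> s /hG; apply: preim_partition_imset.
Qed.

Lemma root_polyC_of_int_rmorph (f : {rmorphism algC -> algC}) (p : {poly int}) z :
  root (polyC_of_int p) (f z) = root (polyC_of_int p) z.
Proof.
by rewrite -[RHS](fmorph_root f) /polyC_of_int -map_poly_comp (eq_map_poly (rmorph_int f)).
Qed.

Lemma galois_perm_exprE n (r : 'I_n -> algC) s k x y : galois_perm r s ->
  (r (s x) ^+ k == r (s y) ^+ k) = (r x ^+ k == r y ^+ k).
Proof. by case=> f rs; rewrite !rs -!rmorphXn (inj_eq (fmorph_inj f)). Qed.

Lemma galois_perm_root_expr n (r : 'I_n -> algC) s (p : {poly int}) k x :
  galois_perm r s -> root (polyC_of_int p) (r (s x) ^+ k) = root (polyC_of_int p) (r x ^+ k).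
Proof. by case=> f rs; rewrite rs -rmorphXn root_polyC_of_int_rmorph. Qed.

Lemma detX (R : comPzRingType) n (A : 'M[R]_n) k : \det (A ^+ k) = \det A ^+ k.
Proof.
elim: k => [|k IHk]; first by rewrite !expr0 det1.
by rewrite !exprS -mulmxE det_mulmx IHk.
Qed.

Lemma root_char_polyX (F : fieldType) n (A : 'M[F]_n) a k :
  root (char_poly A) a -> root (char_poly (A ^+ k)) (a ^+ k).
Proof.
rewrite -!eigenvalue_root_char => /eigenvalueP[v Av nz_v]; apply/eigenvalueP.
exists v => //; elim: k => [|k IHk]; first by rewrite !expr0 scale1r mulmx1.
by rewrite !exprSr -mulmxE mulmxA IHk -scalemxAl Av scalerA.
Qed.

Lemma full_roots_mem (F : idomainType) (p : {poly F}) (s : seq F) z :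
  p != 0 -> size p = (size s).+1 -> all (root p) s -> uniq s -> root p z -> z \in s.
Proof.
move=> nz_p size_p roots_s uniq_s pz; apply: contraT => z_s.
have := max_poly_roots nz_p (_ : all (root p) (z :: s)); rewrite /= z_s pz size_p ltnn.
by move/(_ roots_s uniq_s).
Qed.

Lemma factor_roots_proper (F : closedFieldType) n (p q q' : {poly F}) (z : 'I_n -> F) :
    p = q * q' -> (1 < size q)%N -> (1 < size q')%N -> size p = n.+1 ->
    injective z -> (forall i, root p (z i)) ->
  (exists i, root q (z i)) /\ (exists j, ~~ root q (z j)).
Proof.
move=> pE q_gt1 q'_gt1 size_p z_inj pz.
have nz_q : q != 0 by rewrite -size_poly_eq0 -lt0n ltnW.
have nz_q' : q' != 0 by rewrite -size_poly_eq0 -lt0n ltnW.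
have nz_p : p != 0 by rewrite pE mulf_neq0.
have size_q : (size q <= n)%N.
  by rewrite -ltnS -size_p pE size_mul // ltn_predRL -addn1 ltn_add2l.
pose s := [seq z i | i <- enum 'I_n].
have size_s : size s = n by rewrite size_map size_enum_ord.
have uniq_s : uniq s by rewrite map_inj_uniq ?enum_uniq.
split.
  have [w qw] := closed_rootP q (negbT (gtn_eqF q_gt1)).
  have /mapP[i _ wE] : w \in s.
    apply: (full_roots_mem nz_p) => //; first by rewrite size_s.
      by apply/allP => _ /mapP[i _ ->].
    by rewrite pE rootM qw.
  by exists i; rewrite -wE.
suff : ~~ all (root q) s by case/allPn => _ /mapP[j _ ->]; exists j.
apply: contraTN size_q => /(max_poly_roots nz_q)/(_ uniq_s).
by rewrite size_s -ltnNge.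
Qed.

Lemma root_labelingP n (p : {poly int}) (r : 'I_n -> algC) z :
  root_labeling p r -> reflect (exists i, z = r i) (root (polyC_of_int p) z).
Proof.
move=> ->; rewrite rootE horner_prod. apply: (iffP (@prodf_eq0 _ _ xpredT (fun i => ( (GRing.add (polyX _) (- (r i)%:P))).[z]))) => [[i _]|[i ->]].
  by rewrite hornerXsubC subr_eq0 => /eqP->; exists i.
by exists i; rewrite // hornerXsubC subrr.
Qed.

Lemma root_labeling_char_poly_prod n (M : 'M[int]_n) (r : 'I_n -> algC) :
  root_labeling (char_poly M) r -> \prod_i r i = (\det M)%:~R.
Proof.
move/(congr1 (horner^~ 0)); rewrite horner_coef0 coef_map /= char_poly_det.
rewrite horner_prod (eq_bigr (fun i => - r i)) => [|i _]; last by rewrite hornerXsubC sub0r.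
rewrite prodrN card_ord intrM rmorph_sign => /(congr1 ( *%R ((-1) ^+ n))).
by rewrite !signrMK.
Qed.

Lemma char_poly_linear_factors_eq n (A : 'M[int]_n) (q q' : {poly int}) :
  \det A = 1 -> char_poly A = q * q' -> size q = 2 -> size q' = 2 -> q = q'.
Proof.
move=> detA Aqq' size_q size_q'.
have n_even : odd n = false.
  have := size_char_poly A; rewrite Aqq' size_mul -?size_poly_eq0 ?size_q ?size_q' //.
  by case=> <-.
have lead1 : q`_1 * q'`_1 = 1.
  have := lead_coefM q q'; rewrite -Aqq' (monicP (char_poly_monic A)).
  by rewrite !lead_coefE size_q size_q'.
have const1 : q`_0 * q'`_0 = 1.
  by rewrite -coef0M -Aqq' char_poly_det detA -signr_odd n_even mulr1.
apply/polyP => -[|[|i]]; [exact: mulz_eq1_eq | exact: mulz_eq1_eq |].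
by rewrite !nth_default ?size_q ?size_q'.
Qed.

Section PowerCharPoly.
Variables (n : nat) (M : 'M[int]_n) (k : nat) (r : 'I_n -> algC).
Hypotheses (detM : \det M = 1) (rM : root_labeling (char_poly M) r).

Local Notation mu i := (r i ^+ k).

Lemma root_char_poly_expr i : root (polyC_of_int (char_poly (M ^+ k))) (mu i).
Proof.
rewrite /polyC_of_int map_char_poly rmorphXn; apply: root_char_polyX.
by rewrite -map_char_poly; apply/(root_labelingP _ rM); exists i.
Qed.

Lemma cyclotomic_of_expr_const :
  (0 < k)%N -> (forall i j, mu i = mu j) -> cyclotomic_poly (char_poly M).
Proof.
move=> k_gt0 mu_const z /(root_labelingP _ rM)[i ->]; exists (k * n)%N.
  by rewrite muln_gt0 k_gt0 (leq_ltn_trans (leq0n i) (ltn_ord i)).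
rewrite exprM -[n in _ ^+ n]card_ord -prodr_const (eq_bigr _ (fun j _ => mu_const i j)).
by rewrite prodrXl (root_labeling_char_poly_prod rM) detM expr1n.
Qed.

Lemma imprimitive_of_expr_injective :
  reducible_over_Z (char_poly (M ^+ k)) -> injective (fun i => mu i) ->
  imprimitive (galois_perm r).
Proof.
move=> [q [q' [Mqq' [q_gt1 q'_gt1]]]] mu_inj.
have size_intr (p : {poly int}) : size (polyC_of_int p) = size p.
  by apply: size_map_inj_poly => //; apply: intr_inj.
pose g i := root (polyC_of_int q) (mu i).
have [[i gi] [j gj]] : (exists i, g i) /\ (exists j, ~~ g j).
  apply: (factor_roots_proper (p := polyC_of_int (char_poly (M ^+ k)))) mu_inj _;
    [ by rewrite Mqq' /polyC_of_int rmorphM | by rewrite size_intr | by rewrite size_intr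
    | by rewrite size_intr size_char_poly | exact: root_char_poly_expr ].
have [n_gt2 | n_le2] := ltnP 2 n.
  apply: (imprimitive_preim_partition (h := g) _ _ (x := i) (y := j)).
  - by move=> s Gs x y; rewrite /g !galois_perm_root_expr.
  - by apply: contraTN n_gt2 => /injectiveP/leq_card; rewrite card_ord card_bool -leqNgt.
  - by rewrite gi (negPf gj).
have [size_q size_q'] : size q = 2 /\ size q' = 2.
  have := size_char_poly (M ^+ k).
  rewrite Mqq' size_mul -?size_poly_eq0 -?lt0n ?(ltnW q_gt1) ?(ltnW q'_gt1) // -subn1.
  by move: (size q) (size q') q_gt1 q'_gt1 n_le2 => a b; lia.
have detMk : \det (M ^+ k) = 1 by rewrite detX detM expr1n.
have qq' := char_poly_linear_factors_eq detMk Mqq' size_q size_q'.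
have := root_char_poly_expr j; rewrite Mqq' /polyC_of_int rmorphM -qq' rootM orbb => qj.
by rewrite /g /polyC_of_int qj in gj.
Qed.

End PowerCharPoly.

Theorem lemma8p3 (n : nat) (M : 'M[int]_n) (k : nat) (r : 'I_n -> algC) :
  \det M = 1 ->
  (1 <= k)%N ->
  reducible_over_Z (char_poly (M ^+ k)) ->
  root_labeling (char_poly M) r ->
  imprimitive (galois_perm r) \/ cyclotomic_poly (char_poly M).
Proof.
move=> detM k_gt0 Mk_red rM; pose mu i := r i ^+ k.
have [mu_const | /forallPn[x /forallPn[y mu_xy]]] := boolP [forall i, forall j, mu i == mu j].
  right; apply: (cyclotomic_of_expr_const detM rM k_gt0) => i j.
  exact/eqP/(forallP (forallP mu_const i) j).
left; have [/injectiveP mu_inj | mu_ninj] := boolP (injectiveb mu).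
  exact: (imprimitive_of_expr_injective detM rM Mk_red mu_inj).
apply: (imprimitive_preim_partition _ mu_ninj mu_xy) => s Gs x' y'.
exact: galois_perm_exprE.
Qed.
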